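(* In the conditional setting described in the context, fix $\mathbf x\in\mathcal X$ and assume A1$''$, A2 and A3. Suppose there exist a fixed subset $\mathcal K^*\subseteq\{1,\dots,K\}$ and a constant $\delta>0$ such that $\inf_{\mathbf w\in\mathcal W^*}\sum_{k\in\mathcal K^*}w_k\ge\frac12+\delta$ and $$\limsup_{n\to\infty}\Pr\Big(\bigcup_{k\in\mathcal K^*}\{Y_{\mathbf x}\notin\mathcal C_k(\mathbf x;\mathcal D_n)\}\Big)\le\alpha.$$ Then $\liminf_{n\to\infty}\Pr\big(Y_{\mathbf x}\in\mathcal C_{\mathrm{comb}}(\mathbf x;\mathcal D_n)\big)\ge1-\alpha$.
   Context: Conditional setting: fix $K\ge2$ and $\alpha\in(0,1)$. For each $n$, on a common probability space there is a random data set $\mathcal D_n$. For each $k\in\{1,\dots,K\}$ and each $\mathbf x\in\mathcal X\subseteq\mathbb R^p$, $\mathcal C_k(\mathbf x;\mathcal D_n)\subseteq\mathbb R$ is a prediction set determined by $\mathcal D_n$ and $\mathbf x$. For a fixed test covariate value $\mathbf x$, $Y_{\mathbf x}$ denotes a real random variable distributed as the conditional law of the response given covariate $\mathbf x$, independent of $\mathcal D_n$; conditioning on $\{\mathbf X=\mathbf x\}$ means evaluating at $\mathbf x$ with response $Y_{\mathbf x}$. The events $\{Y_{\mathbf x}\in\mathcal C_k(\mathbf x;\mathcal D_n)\}$ are assumed measurable. Let $\Delta^{K-1}=\{\mathbf w\in[0,1]^K:w_k\ge0,\sum_k w_k=1\}$, let $\widehat{\mathbf w}_n=(\widehat w_{n,1},\dots,\widehat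 w_{n,K})$ be a $\sigma(\mathcal D_n)$-measurable random vector in $\Delta^{K-1}$, and let $\mathcal W^*\subseteq\Delta^{K-1}$ be a nonempty closed convex set; $\|\cdot\|$ is the Euclidean norm. A1$''$: $\sup_{k\in\{1,\dots,K\}}\big|\Pr(Y_{\mathbf x}\notin\mathcal C_k(\mathbf x;\mathcal D_n)\mid\mathcal D_n)-\alpha\big|\to0$ in probability as $n\to\infty$. A2: $\inf_{\mathbf w\in\mathcal W^*}\|\widehat{\mathbf w}_n-\mathbf w\|\to0$ in probability as $n\to\infty$. A3: $\mathcal C_{\mathrm{comb}}(\mathbf x;\mathcal D_n):=\{y\in\mathbb R:\sum_{k=1}^K\widehat w_{n,k}\mathbf 1\{y\in\mathcal C_k(\mathbf x;\mathcal D_n)\}>1/2\}$. *)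

From HB Require Import structures.
From mathcomp Require Import all_boot all_order all_algebra.
From mathcomp Require Import all_classical all_reals all_analysis.
Set Implicit Arguments. Unset Strict Implicit. Unset Printing Implicit Defensive.
Import Order.TTheory GRing.Theory Num.Theory.
Import numFieldNormedType.Exports.
Local Open Scope classical_set_scope.
Local Open Scope ring_scope.

Definition simplex (R : realType) (K : nat) : set ('rV[R]_K) :=
  [set w | (forall k, 0 <= w ord0 k) /\ \sum_(k < K) w ord0 k = 1].

Definition eucl_norm (R : realType) (K : nat) (w : 'rV[R]_K) : R :=
  Num.sqrt (\sum_(k < K) (w ord0 k) ^+ 2).

Definition dist_to (R : realType) (K : nat) (W : set ('rV[R]_K)) (v : 'rV[R]_K) : R :=
  inf [set eucl_norm (v - w) | w in W].

Definition cvg_in_prob0 d (T : measurableType d) (R : realType)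
    (P : probability T R) (X : nat -> T -> R) : Prop :=
  forall eps : R, 0 < eps ->
    (fun n => P [set om | eps <= `|X n om|]) @ \oo --> 0%E.

Definition C_comb (R : realType) (K : nat) (w : 'rV[R]_K) (C : 'I_K -> set R) : set R :=
  [set y | 1 / 2 < \sum_(k < K) w ord0 k * \1_(C k) y].

From HB Require Import structures.
From mathcomp Require Import all_boot all_order all_algebra.
From mathcomp Require Import all_classical all_reals all_analysis.
From mathcomp Require Import measurable_realfun ring lra.
Set Implicit Arguments. Unset Strict Implicit. Unset Printing Implicit Defensive.
Import Order.TTheory GRing.Theory Num.Theory.
Import numFieldNormedType.Exports.
Local Open Scope classical_set_scope.
Local Open Scope ring_scope.

(* When w_hat_n lies within delta/K of W*, its weights on K* still sum to more
   than 1/2, so a response covered by every C_k with k in K* is covered by the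
   weighted majority vote.  The combined set therefore misses Y only if some C_k
   with k in K* misses it or w_hat_n is at distance at least delta/K from W*; the
   first event has limsup probability at most alpha and the second has vanishing
   probability by A2.  The delicate point is the measurability of the second
   event: the distance to W* is 1-Lipschitz for the Euclidean norm, so its
   sublevel sets are countable unions of balls centred at rational points. *)

Lemma sqrtr_le_sqr (R : rcfType) (x y : R) : 0 <= y -> x <= y ^+ 2 -> Num.sqrt x <= y.
Proof. by move=> y0 xy; rewrite -(ger0_norm y0) -sqrtr_sqr ler_sqrt ?sqr_ge0. Qed.

Lemma sqr_sum_mul_le (R : realFieldType) (I : finType) (a b : I -> R) :
  (\sum_i a i * b i) ^+ 2 <= (\sum_i a i ^+ 2) * (\sum_i b i ^+ 2).
Proof.
have lagrange : \sum_i \sum_j (a i * b j - a j * b i) ^+ 2 =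
    ((\sum_i a i ^+ 2) * (\sum_i b i ^+ 2) - (\sum_i a i * b i) ^+ 2) *+ 2.
  have expand i j : (a i * b j - a j * b i) ^+ 2 =
      a i ^+ 2 * b j ^+ 2 + b i ^+ 2 * a j ^+ 2 - (a i * b i * (a j * b j)) *+ 2.
    by ring.
  under eq_bigr do under eq_bigr do rewrite expand.
  under eq_bigr do rewrite sumrB big_split sumrMnl.
  rewrite sumrB big_split sumrMnl /= -!big_distrlr /=.
  ring.
have : 0 <= \sum_i \sum_j (a i * b j - a j * b i) ^+ 2.
  by do 2![apply: sumr_ge0 => ? _]; exact: sqr_ge0.
by rewrite lagrange pmulrn_lge0 // subr_ge0.
Qed.

Section EuclideanNorm.
Variables (R : realType) (K : nat).
Implicit Types (u v : 'rV[R]_K).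

Lemma eucl_norm_ge0 v : 0 <= eucl_norm v.
Proof. exact: sqrtr_ge0. Qed.

Lemma sumr_sqr_ge0 v : 0 <= \sum_(k < K) v ord0 k ^+ 2.
Proof. by apply: sumr_ge0 => k _; exact: sqr_ge0. Qed.

Lemma eucl_norm_sqr v : eucl_norm v ^+ 2 = \sum_(k < K) v ord0 k ^+ 2.
Proof. exact/sqr_sqrtr/sumr_sqr_ge0. Qed.

Lemma eucl_normN v : eucl_norm (- v) = eucl_norm v.
Proof. by rewrite /eucl_norm; under eq_bigr do rewrite mxE sqrrN. Qed.

Lemma coord_le_eucl_norm v k : `|v ord0 k| <= eucl_norm v.
Proof.
rewrite -sqrtr_sqr ler_sqrt ?sumr_sqr_ge0 // (bigD1 k) //= lerDl.
by apply: sumr_ge0 => i _; exact: sqr_ge0.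
Qed.

Lemma eucl_norm_le_coord v (t : R) :
  0 <= t -> (forall k, `|v ord0 k| <= t) -> eucl_norm v <= K%:R * t.
Proof.
move=> t0 vt; apply: sqrtr_le_sqr; first by rewrite mulr_ge0.
apply: (@le_trans _ _ (\sum_(k < K) t ^+ 2)).
  by apply: ler_sum => k _; rewrite -real_normK ?num_real // lerXn2r ?nnegrE.
rewrite sumr_const card_ord -[_ *+ K]mulr_natl exprMn ler_wpM2r ?sqr_ge0 //.
by rewrite -natrX ler_nat; case: (K) => // n; rewrite leq_pmulr.
Qed.

Lemma eucl_normD u v : eucl_norm (u + v) <= eucl_norm u + eucl_norm v.
Proof.
apply: sqrtr_le_sqr; first by rewrite addr_ge0 ?eucl_norm_ge0.
have cauchy_schwarz : \sum_k u ord0 k * v ord0 k <= eucl_norm u * eucl_norm v.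
  rewrite -sqrtrM ?sumr_sqr_ge0 // (le_trans (ler_norm _)) // -sqrtr_sqr.
  by rewrite ler_sqrt ?sqr_sum_mul_le // mulr_ge0 ?sumr_sqr_ge0.
under eq_bigr do rewrite mxE sqrrD.
rewrite sqrrD !eucl_norm_sqr !big_split /=.
by rewrite lerD2r lerD2l mulr2n lerD.
Qed.

End EuclideanNorm.

Section DistTo.
Variables (R : realType) (K : nat) (W : set 'rV[R]_K).
Hypothesis W0 : W !=set0.
Implicit Types (u v w : 'rV[R]_K).

Let norms_lbound v : has_lbound [set eucl_norm (v - w) | w in W].
Proof. by exists 0 => _ [w _ <-]; exact: eucl_norm_ge0. Qed.

Let norms_neq0 v : [set eucl_norm (v - w) | w in W] !=set0.
Proof. by case: W0 => w Ww; exists (eucl_norm (v - w)), w. Qed.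

Lemma dist_to_ge0 v : 0 <= dist_to W v.
Proof. by apply: lb_le_inf (norms_neq0 v) _ => _ [w _ <-]; exact: eucl_norm_ge0. Qed.

Lemma dist_to_le v w : W w -> dist_to W v <= eucl_norm (v - w).
Proof. by move=> Ww; apply: (ge_inf (norms_lbound v)); exists w. Qed.

Lemma dist_to_ltP v e : dist_to W v < e -> exists2 w, W w & eucl_norm (v - w) < e.
Proof. by move=> /(inf_lt (norms_neq0 v)) [_ [w Ww <-]]; exists w. Qed.

Lemma dist_to_lipschitz u v : dist_to W u <= dist_to W v + eucl_norm (u - v).
Proof.
rewrite -lerBlDr; apply: lb_le_inf (norms_neq0 v) _ => _ [w Ww <-].
rewrite lerBlDr (le_trans (dist_to_le u Ww)) //.
have -> : u - w = (u - v) + (v - w) by rewrite addrA subrK.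
by rewrite addrC eucl_normD.
Qed.

End DistTo.

Lemma rat_row_approx (R : realType) (K : nat) (v : 'rV[R]_K) (e : R) :
  0 < e -> exists q : 'rV[rat]_K, eucl_norm (v - map_mx ratr q) < e.
Proof.
move=> e0; pose t := e / K.+1%:R.
have t0 : 0 < t by rewrite divr_gt0.
have /choice [q qP] : forall k : 'I_K, exists q : rat,
    ratr q \in `]v ord0 k - t, v ord0 k + t[.
  by move=> k; apply: rat_in_itvoo; rewrite ltrBlDr -addrA ltrDl addr_gt0.
exists (\row_k q k); apply: le_lt_trans (eucl_norm_le_coord (ltW t0) _) _.
  move=> k; rewrite !mxE; move: (qP k); rewrite in_itv /= => /andP [lo hi].
  by rewrite ler_norml; apply/andP; split; lra.
by rewrite /t mulrA ltr_pdivrMr ?ltr0n // mulrC ltr_pM2l // ltr_nat.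
Qed.

Section Measurability.
Variables (d : measure_display) (T : measurableType d) (R : realType) (K : nat).
Variable f : T -> 'rV[R]_K.
Hypothesis mf : forall k, measurable_fun setT (fun om => f om ord0 k).

Lemma measurable_eucl_norm_subr (q : 'rV[R]_K) :
  measurable_fun setT (fun om => eucl_norm (f om - q)).
Proof.
apply: (measurableT_comp (continuous_measurable_fun (@sqrt_continuous R))).
apply: measurable_sum => k; apply: measurable_funX.
rewrite (_ : (fun om => _) = fun om => f om ord0 k - q ord0 k); last first.
  by apply/funext => om; rewrite !mxE.
by apply: measurable_funB => //; exact: measurable_cst.
Qed.

Lemma measurable_lipschitz_lt (g : 'rV[R]_K -> R) (eps : R) :
  (forall u v, g u <= g v + eucl_norm (u - v)) ->
  measurable [set om | g (f om) < eps].
Proof.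
move=> g_lip; pose ratv (q : 'rV[rat]_K) : 'rV[R]_K := map_mx ratr q.
pose ball (i : 'rV[rat]_K * rat) := [set om | eucl_norm (f om - ratv i.1) < ratr i.2].
pose good (i : 'rV[rat]_K * rat) := g (ratv i.1) + ratr i.2 < eps.
have -> : [set om | g (f om) < eps] =
    \bigcup_i (if `[< good i >] then ball i else set0).
  apply/seteqP; split => [om gf_lt|om [i _]]; last first.
    case: asboolP => // good_i /= ball_i.
    apply: le_lt_trans (g_lip _ (ratv i.1)) _.
    by apply: lt_trans good_i; rewrite ltrD2l.
  have [t t0 t3] : exists2 t : R, 0 < t & t * 3 = eps - g (f om).
    exists ((eps - g (f om)) / 3); last by rewrite divfK // pnatr_eq0.
    by rewrite divr_gt0 // subr_gt0.
  have [q q_near] := rat_row_approx (f om) t0.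
  have [r] : exists r : rat, ratr r \in `]t, t * 2[ by apply: rat_in_itvoo; lra.
  rewrite in_itv /= => /andP [r_lo r_hi].
  exists (q, r) => //; rewrite asboolT /ball /=; first by rewrite /ratv; lra.
  rewrite /good /ratv /=; have := g_lip (map_mx ratr q) (f om).
  by rewrite -opprB eucl_normN; lra.
apply: countable_bigcupT_measurable => [|i]; first exact: countableP.
case: asboolP => _ //; rewrite -[ball i]setTI /ball -preimage_itvNyo.
exact: measurable_eucl_norm_subr measurableT _ (measurable_itv _).
Qed.

Lemma measurable_dist_to_ge (W : set 'rV[R]_K) (eps : R) : W !=set0 ->
  measurable [set om | eps <= dist_to W (f om)].
Proof.
move=> W0; rewrite (_ : [set om | _] = ~` [set om | dist_to W (f om) < eps]).
  exact/measurableC/measurable_lipschitz_lt/dist_to_lipschitz.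
by apply/seteqP; split => om /=; rewrite leNgt => /negP.
Qed.

End Measurability.

Lemma measurable_exists_notin d (U : measurableType d) (I : finType)
    (A : {set I}) (S : I -> set U) :
  (forall i, measurable (S i)) -> measurable [set z | exists2 i, i \in A & ~ S i z].
Proof.
move=> mS; apply: (@fin_bigcup_measurable _ _ _ [set i | i \in A] (fun i => ~` S i)).
  exact: finite_finset.
by move=> i _; exact: measurableC.
Qed.

Lemma measurable_C_comb d (T : measurableType d) (R : realType) (K : nat)
    (w : T -> 'rV[R]_K) (C : 'I_K -> T -> set R) :
  (forall k, measurable_fun setT (fun om => w om ord0 k)) ->
  (forall k, measurable [set z : T * R | C k z.1 z.2]) ->
  measurable [set z : T * R | C_comb (w z.1) (fun k => C k z.1) z.2].
Proof.
move=> mw mC; rewrite -[X in measurable X]setTI -preimage_itvoy.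
apply: (measurable_sum _ (fun k => _)) measurableT _ (measurable_itv _) => k.
apply: measurable_funM; first exact: measurableT_comp (mw k) measurable_fst.
exact: measurable_indic (mC k).
Qed.

Lemma C_comb_majority (R : realType) (K : nat) (w : 'rV[R]_K) (C : 'I_K -> set R)
    (A : {set 'I_K}) (y : R) :
  (forall k, 0 <= w ord0 k) -> 1 / 2 < \sum_(k in A) w ord0 k ->
  (forall k, k \in A -> C k y) -> C_comb w C y.
Proof.
move=> w0 majA AC; apply: lt_le_trans majA _.
rewrite [leRHS](bigID (mem A)) /= -[leLHS]addr0 lerD //.
  by apply: ler_sum => k kA; rewrite indicE mem_set ?mulr1 //; exact: AC.
by apply: sumr_ge0 => k _; rewrite mulr_ge0 // indicE ler0n.
Qed.

Lemma majority_of_dist_to_lt (R : realType) (K : nat) (W : set 'rV[R]_K)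
    (A : {set 'I_K}) (delta : R) (v : 'rV[R]_K) :
  (0 < K)%N -> W !=set0 -> W `<=` simplex (K := K) ->
  1 / 2 + delta <= inf [set \sum_(k in A) w ord0 k | w in W] ->
  dist_to W v < delta / K%:R -> 1 / 2 < \sum_(k in A) v ord0 k.
Proof.
move=> K0 W0 Wsub Winf /(dist_to_ltP W0) [w Ww vw].
have majA : 1 / 2 + delta <= \sum_(k in A) w ord0 k.
  apply: le_trans Winf (ge_inf _ _); last by exists w.
  by exists 0 => _ [u /Wsub [u0 _] <-]; exact: sumr_ge0.
have close : \sum_(k in A) (w ord0 k - v ord0 k) < delta.
  apply: (@le_lt_trans _ _ (K%:R * eucl_norm (v - w))).
    apply: (@le_trans _ _ (\sum_(k in A) eucl_norm (v - w))).
      apply: ler_sum => k _; apply: le_trans (coord_le_eucl_norm _ k).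
      by rewrite !mxE distrC ler_norm.
    rewrite sumr_const -[eucl_norm _ *+ _]mulr_natl ler_wpM2r ?eucl_norm_ge0 // ler_nat.
    by have := max_card A; rewrite card_ord.
  by rewrite mulrC -ltr_pdivlMr ?ltr0n.
by rewrite sumrB in close; lra.
Qed.

Lemma probability_cover3 d (T : measurableType d) (R : realType)
    (Q : probability T R) (A B C : set T) :
  measurable A -> measurable B -> measurable C -> setT `<=` A `|` B `|` C ->
  (1 <= Q A + Q B + Q C)%E.
Proof.
move=> mA mB mC cover; rewrite -(probability_setT Q).
apply: (@le_trans _ _ (Q (A `|` B `|` C))).
  by apply: le_measure cover; rewrite inE //; apply: measurableU => //; exact: measurableU.
apply: le_trans (measureU2 Q (measurableU _ _ mA mB) mC) _.
exact: leeD (measureU2 Q mA mB) (lexx _).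
Qed.

Lemma probability_fin_num d (T : measurableType d) (R : realType)
    (Q : probability T R) (A : set T) :
  measurable A -> Q A \is a fin_num.
Proof. by move=> mA; rewrite ge0_fin_numE // (le_lt_trans (probability_le1 Q mA)) ?ltey. Qed.

Lemma product_measureXT d1 d2 (T1 : measurableType d1) (T2 : measurableType d2)
    (R : realType) (m1 : measure T1 R) (m2 : probability T2 R) (A : set T1) :
  measurable A -> (m1 \x m2)%E (A `*` setT) = m1 A.
Proof.
move=> mA; rewrite product_measure1E // [X in (_ * X)%E](_ : _ = 1%E) ?mule1 //.
exact: probability_setT.
Qed.

Section LimnEinf.
Context {R : realType}.
Local Open Scope ereal_scope.
Implicit Types u : (\bar R)^nat.

Lemma limn_esup_lt_near u x : limn_esup u < x -> \forall n \near \oo, u n < x.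
Proof.
rewrite /limn_esup limf_esupE => /ereal_inf_lt [_ [V Voo <-]] supV.
by apply: filterS Voo => n Vn; apply: le_lt_trans supV; apply: ereal_sup_ubound; exists n.
Qed.

Lemma limn_einf_ge_near u x : (\forall n \near \oo, x <= u n) -> x <= limn_einf u.
Proof.
move=> [N _ xu]; rewrite limn_einf_lim; apply: lime_ge; first exact: is_cvg_einfs.
near=> m; apply: le_ereal_inf_tmp => _ [k /= mk <-]; apply: xu => /=.
by rewrite (leq_trans _ mk) //; near: m; exists N.
Unshelve. all: by end_near. Qed.

Lemma limn_einf_ge_sub_esup (a b c : (\bar R)^nat) (x l : R) :
  (forall n, b n \is a fin_num) -> (forall n, c n \is a fin_num) ->
  (forall n, x%:E <= a n + b n + c n) ->
  limn_esup b <= l%:E -> c @ \oo --> 0 -> (x - l)%:E <= limn_einf a.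
Proof.
move=> bfin cfin abc bl c0; apply/lee_addgt0Pr => e e0.
rewrite -leeBlDr // -EFinB; apply: limn_einf_ge_near.
have e2 : (0 < e / 2)%R by rewrite divr_gt0.
have b_lt : \forall n \near \oo, b n < (l + e / 2)%:E.
  by apply: limn_esup_lt_near; apply: le_lt_trans bl _; rewrite lte_fin ltrDl.
have c_lt : \forall n \near \oo, c n < (e / 2)%:E.
  by apply: limn_esup_lt_near; rewrite (cvg_limn_einf_sup c0).2 lte_fin.
move: b_lt c_lt; apply: filterS2 => n; move: (abc n).
rewrite -(fineK (bfin n)) -(fineK (cfin n)) !lte_fin.
by case: (a n) => [r||] //=; rewrite ?lee_fin ?leey //; lra.
Qed.

End LimnEinf.

Theorem theorem4 (d : measure_display) (T : measurableType d) (R : realType)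
  (P : probability T R)                      (* law of the data sequence (D_n)_n *)
  (mu : probability (measurableTypeR R) R)   (* conditional law of Y given X = x *)
  (K : nat) (alpha : R)
  (C : 'I_K -> nat -> T -> set R)            (* C k n om = C_k(x; D_n(om)) *)
  (w_hat : nat -> T -> 'rV[R]_K)
  (W_star : set ('rV[R]_K))
  (K_star : {set 'I_K}) (delta : R) :
  (2 <= K)%N ->
  0 < alpha < 1 ->
  (forall k n, measurable [set z : T * R | C k n z.1 z.2]) ->
  (forall n om, simplex (w_hat n om)) ->
  (forall n k, measurable_fun setT (fun om => w_hat n om ord0 k)) ->
  W_star !=set0 -> closed W_star -> convex_set W_star -> W_star `<=` simplex (K := K) ->
  (* A1'' *)
  cvg_in_prob0 P (fun n om =>
    \big[Order.max/0]_(k < K) `|fine (mu (~` C k n om)) - alpha|) ->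
  (* A2 *)
  cvg_in_prob0 P (fun n om => dist_to W_star (w_hat n om)) ->
  0 < delta ->
  inf [set \sum_(k in K_star) w ord0 k | w in W_star] >= 1 / 2 + delta ->
  (limn_esup (fun n => (P \x mu)%E
      [set z : T * R | exists2 k, k \in K_star & ~ C k n z.1 z.2]) <= alpha%:E)%E ->
  (limn_einf (fun n => (P \x mu)%E
      [set z : T * R | C_comb (w_hat n z.1) (fun k => C k n z.1) z.2])
     >= (1 - alpha)%:E)%E.
Proof.
move=> K2 _ mC w_simplex mw W0 _ _ Wsub _ A2 delta0 W_maj miss_limsup.
have K0 : (0 < K)%N by apply: leq_trans K2.
pose eps := delta / K%:R.
pose far n := [set om | eps <= dist_to W_star (w_hat n om)].
pose miss n := [set z : T * R | exists2 k, k \in K_star & ~ C k n z.1 z.2].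
pose comb n := [set z : T * R | C_comb (w_hat n z.1) (fun k => C k n z.1) z.2].
have mfar n : measurable (far n) := measurable_dist_to_ge (mw n) eps W0.
have mmiss n : measurable (miss n) := measurable_exists_notin K_star (fun k => mC k n).
have mcomb n : measurable (comb n) :=
  measurable_C_comb (C := fun k => C k n) (mw n) (fun k => mC k n).
have cover n : setT `<=` comb n `|` miss n `|` far n `*` setT.
  move=> [om y] _; have [|near_W] := pselect (far n om); first by right.
  have [|hit] := pselect (miss n (om, y)); first by left; right.
  left; left; apply: (C_comb_majority (A := K_star)) => [k|//|k kA].
  - exact: (w_simplex n om).1.
  - by apply: (majority_of_dist_to_lt K0 W0 Wsub W_maj); rewrite ltNge; apply/negP.
  - by apply: contrapT => nC; apply: hit; exists k.
have far0 : (fun n => P (far n)) @ \oo --> 0%E.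
  suff -> : far = fun n => [set om | eps <= `|dist_to W_star (w_hat n om)|].
    by apply: A2; rewrite divr_gt0 ?ltr0n.
  apply/funext => n; apply/seteqP; split => om /=;
    by rewrite ger0_norm // dist_to_ge0.
apply: (limn_einf_ge_sub_esup _ _ _ miss_limsup far0) => n.
- exact: (probability_fin_num (P \x mu)%E (mmiss n)).
- exact: probability_fin_num (mfar n).
- rewrite -(product_measureXT P mu (mfar n)).
  apply: (probability_cover3 (P \x mu)%E (mcomb n) (mmiss n) _ (cover n)).
  exact: measurableX (mfar n) measurableT.
Qed.
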